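(* In the transfer model and with the freeze algorithm $\mathrm{CalcFreeze}$ described in the context (applied after the cycle-elimination preprocessing, if $G$ has cycles), suppose no burn transactions occur between the disputed transaction $t_0$ and the freeze time, and let $s=\mathrm{val}(t_0)$ be the amount sent by $t_0=(v\to a_0)$. Then when the algorithm terminates, the total amount frozen is exactly $s$: $$ s=\sum_{a}\mathrm{toFreeze}(a), $$ where the sum ranges over all vertices $a$ of the (preprocessed) graph.
   Context: Transfer model. There is a finite set of addresses, each holding a nonnegative token balance. A transaction is a transfer $t=(a\to b)$ of value $\mathrm{val}(t)\ge 0$ from address $a$ to address $b$; it decreases the balance of $a$ by $\mathrm{val}(t)$ and increases the balance of $b$ by $\mathrm{val}(t)$. Transactions are totally ordered in time, and each transaction is valid: the sender's balance never becomes negative. There are no burns, i.e. no operation removes tokens from an address other than a transfer. The disputed transaction is $t_0=(v\to a_0)$ with $s=\mathrm{val}(t_0)$. The freeze happens at a time after $t_0$ and after all transactions considered. For an address $a$, $\mathrm{Bal}(a)$ denotes its balance at the freeze time; no amounts are frozen before this freeze. Transaction graph $G$. Consider the transactions strictly after $t_0$ and before the freeze. $G$ is the directed multigraph whose edges are those transactions $(b\to c)$ for which there is a directed path of such transactions from $a_0$ to $b$ ($b=a_0$ allowed). The vertices are $a_0$ and all endpoints of these edges. Each edge keeps its time and its value $\mathrm{val}$. Cycle elimination (preprocessing). While $G$ contains a directed cycle $c_0,\dots,c_{k-1}$ of edges, let $c$ be an edge of minimal value on it (ties broken arbitrarily) and $d=\mathrm{val}(c)$. Remove $c$ from $G$ and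 subtract $d$ from the value of every other edge of the cycle. Edge times are unchanged. Repeat until $G$ is acyclic. Algorithm $\mathrm{CalcFreeze}$ (on acyclic $G$): - Let $L$ be a topological order of the vertices of $G$, i.e. for every edge $a\to b$, $a$ precedes $b$. - Initialize $\mathrm{oblig}(a)=0$ for all $a\neq a_0$ and $\mathrm{oblig}(a_0)=s$. - For each $a$ in the order $L$: - Set $\tau=\mathrm{oblig}(a)$, $\mathrm{toFreeze}(a)=\min(\tau,\mathrm{Bal}(a))$ and $\tau'=\tau-\mathrm{toFreeze}(a)$. - If $\tau'\le 0$, proceed to the next vertex. - Otherwise, iterate over the outgoing edges $t=(a\to b)$ of $a$ in $G$ in reverse chronological order (most recent first). For each such edge set $\mathrm{ob}(b,t)=\min(\tau',\mathrm{val}(t))$, add $\mathrm{ob}(b,t)$ to $\mathrm{oblig}(b)$, and subtract $\mathrm{ob}(b,t)$ from $\tau'$. Stop iterating over the edges of $a$ as soon as $\tau'\le 0$. - Edges never processed have $\mathrm{ob}(b,t)=0$. *)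

From mathcomp Require Import all_boot all_order all_algebra.
Set Implicit Arguments. Unset Strict Implicit. Unset Printing Implicit Defensive.
Import Order.TTheory GRing.Theory Num.Theory.
Local Open Scope ring_scope.

Section Model.
Variables (R : realDomainType) (A : finType).

Definition tx := (A * A * R)%type.
Definition tsrc (t : tx) : A := t.1.1.
Definition tdst (t : tx) : A := t.1.2.
Definition tval (t : tx) : R := t.2.

(* Effect of a transfer on balances (no burns: only transfers exist). *)
Definition apply_tx (bal : A -> R) (t : tx) : A -> R :=
  fun x => bal x - (if x == tsrc t then tval t else 0)
                 + (if x == tdst t then tval t else 0).

Fixpoint valid_run (bal : A -> R) (ts : seq tx) : Prop :=
  match ts with
  | [::] => True
  | t :: ts' => [/\ 0 <= tval t, 0 <= bal (tsrc t) - tval t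
                  & valid_run (apply_tx bal t) ts']
  end.

Definition final_bal (bal : A -> R) (ts : seq tx) : A -> R := foldl apply_tx bal ts.

(* Edges of G: (time, transaction); time = position among the transactions
   strictly after t0. *)
Definition edge := (nat * tx)%type.
Definition etime (e : edge) : nat := e.1.
Definition esrc (e : edge) : A := tsrc e.2.
Definition edst (e : edge) : A := tdst e.2.
Definition eval (e : edge) : R := tval e.2.

Definition post_rel (post : seq tx) : rel A :=
  fun x y => has (fun t => (tsrc t == x) && (tdst t == y)) post.

Definition txgraph (a0 : A) (post : seq tx) : seq edge :=
  [seq (i, nth (a0, a0, 0) post i) |
     i <- iota 0 (size post) & connect (post_rel post) a0 (tsrc (nth (a0, a0, 0) post i))].

Definition vertices (a0 : A) (post : seq tx) : seq A :=
  undup (a0 :: flatten [seq [:: esrc e; edst e] | e <- txgraph a0 post]).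

Definition is_cycle (G cyc : seq edge) : Prop :=
  [/\ cyc != [::], all (fun e => e \in G) cyc, uniq cyc, uniq (map esrc cyc)
    & cycle (fun e f => edst e == esrc f) cyc].

Definition acyclic (G : seq edge) : Prop := ~ exists cyc, is_cycle G cyc.

Definition elim_step (G G' : seq edge) : Prop :=
  exists cyc c, [/\ is_cycle G cyc, c \in cyc,
    (forall e, e \in cyc -> eval c <= eval e)
    & G' = [seq (if e \in cyc then (etime e, (esrc e, edst e, eval e - eval c)) else e)
            | e <- G & e != c]].

Inductive elim_result : seq edge -> seq edge -> Prop :=
| elim_done G : acyclic G -> elim_result G G
| elim_more G G1 G2 : elim_step G G1 -> elim_result G1 G2 -> elim_result G G2.

Definition topo_order (V : seq A) (G : seq edge) (L : seq A) : Prop :=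
  uniq L /\ perm_eq L V /\
  forall e, e \in G -> (index (esrc e) L < index (edst e) L)%N.

Definition out_edges (G : seq edge) (a : A) : seq edge :=
  sort (fun e f => etime f <= etime e)%N [seq e <- G | esrc e == a].

Fixpoint distribute (tau : R) (es : seq edge) (ob : A -> R) : A -> R :=
  match es with
  | [::] => ob
  | e :: es' =>
      if tau <= 0 then ob else
      let x := Num.min tau (eval e) in
      distribute (tau - x) es' (fun b => if b == edst e then ob b + x else ob b)
  end.

(* Process one vertex a; state = (oblig, toFreeze). *)
Definition process (Bal : A -> R) (G : seq edge) (st : (A -> R) * (A -> R)) (a : A)
  : (A -> R) * (A -> R) :=
  let ob := st.1 in
  let fr := st.2 in
  let tau := ob a in
  let f := Num.min tau (Bal a) in
  (distribute (tau - f) (out_edges G a) ob, fun x => if x == a then f else fr x).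

Definition calc_freeze (Bal : A -> R) (G : seq edge) (a0 : A) (s : R) (L : seq A)
  : (A -> R) * (A -> R) :=
  foldl (process Bal G) ((fun x => if x == a0 then s else 0), fun _ => 0) L.

Definition toFreeze (Bal : A -> R) (G : seq edge) (a0 : A) (s : R) (L : seq A) : A -> R :=
  (calc_freeze Bal G a0 s L).2.

End Model.

(* CalcFreeze conserves obligation: at a vertex a, whatever part of oblig(a) is not frozen is
   pushed in full along the outgoing edges as long as their total value can absorb it, i.e. as
   long as oblig(a) - Bal(a) <= outflow(a); in a topological order nothing is ever sent to a
   vertex already processed.  The obligation reaching a is at most its inflow in G (plus s at
   a0), so it suffices that inflow(a) + [a = a0] s <= Bal(a) + outflow(a).  This holds because
   cycle elimination preserves net inflows, the balance right after t0 is at least [a = a0] s,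
   and every transaction after t0 missing from G leaves an address unreachable from a0, hence
   can only raise the balance of a vertex of G. *)

From Pilot Require Import Defs.
From mathcomp Require Import all_boot all_order all_algebra.
From mathcomp Require Import lra.
Import Order.TTheory GRing.Theory Num.Theory.

Set Implicit Arguments.
Unset Strict Implicit.
Unset Printing Implicit Defensive.

Local Open Scope ring_scope.

Section Flows.
Variables (R : realDomainType) (A : finType).
Implicit Types (x : A) (b : A -> R) (t : tx R A) (ts : seq (tx R A)) (G : seq (edge R A)).

Definition flow_at x t : R :=
  (if x == tdst t then Defs.tval t else 0) - (if x == tsrc t then Defs.tval t else 0).

Lemma apply_txE b t x : apply_tx b t x = b x + flow_at x t.
Proof. rewrite /apply_tx /flow_at; lra. Qed.

Lemma final_balE b ts x : final_bal b ts x = b x + \sum_(t <- ts) flow_at x t.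
Proof.
elim: ts b => [|t ts IH] b; first by rewrite big_nil addr0.
by rewrite /final_bal /= -/(final_bal _ _) IH apply_txE big_cons -addrA.
Qed.

Lemma valid_run_cat b p q :
  valid_run b (p ++ q) <-> valid_run b p /\ valid_run (final_bal b p) q.
Proof.
elim: p b => [|t p IH] b /=; first by split=> // -[].
split=> [[? ? /IH[? ?]] | [[? ? ?] ?]]; first by [].
by split=> //; apply/IH.
Qed.

Lemma valid_run_bal_ge0 b ts :
  (forall x, 0 <= b x) -> valid_run b ts -> forall x, 0 <= final_bal b ts x.
Proof.
elim: ts b => [|t ts IH] b //= b_ge0 [t_ge0 src_ge0 run]; apply: IH run => x.
rewrite apply_txE /flow_at; have := b_ge0 x.
by case: (x =P tsrc t) => [->|_]; case: ifP => _; lra.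
Qed.

Lemma valid_run_tval_ge0 b ts : valid_run b ts -> {in ts, forall t, 0 <= Defs.tval t}.
Proof.
elim: ts b => [|t ts IH] b //= [t_ge0 _ run] u; rewrite inE => /predU1P[-> //|].
exact: IH run u.
Qed.

Lemma tval_le_apply_tx b t x :
  (forall y, 0 <= b y) -> 0 <= b (tsrc t) - Defs.tval t ->
  (if x == tdst t then Defs.tval t else 0) <= apply_tx b t x.
Proof.
rewrite apply_txE /flow_at => b_ge0; have := b_ge0 x.
by case: (x =P tsrc t) => [->|_]; case: ifP => _; lra.
Qed.

Definition net_inflow G x : R := \sum_(e <- G) flow_at x e.2.
Definition inflow G x : R := \sum_(e <- G | edst e == x) eval e.
Definition outflow G x : R := \sum_(e <- G | esrc e == x) eval e.

Lemma net_inflowE G x : net_inflow G x = inflow G x - outflow G x.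
Proof.
rewrite /net_inflow /flow_at sumrB /inflow /outflow !(big_mkcond (fun e => _ == x)).
by congr (_ - _); apply: eq_bigr => e _; rewrite eq_sym.
Qed.

Lemma flow_atB x y z (u w : R) :
  flow_at x (y, z, u - w) = flow_at x (y, z, u) - flow_at x (y, z, w).
Proof. by rewrite /flow_at /=; case: ifP; case: ifP => _ _; rewrite ?subr0 ?sub0r; lra. Qed.

Lemma path_edst_esrc (e : edge R A) p :
  path (fun e f => edst e == esrc f) e p ->
  map (@edst R A) (belast e p) = map (@esrc R A) p.
Proof. by elim: p e => [|f p IH] e //= /andP[/eqP -> /IH ->]. Qed.

Lemma cycle_perm_edst_esrc (cyc : seq (edge R A)) :
  cycle (fun e f => edst e == esrc f) cyc -> perm_eq (map (@edst R A) cyc) (map (@esrc R A) cyc).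
Proof.
case: cyc => [|e p] //= /path_edst_esrc.
by rewrite belast_rcons map_rcons /= => ->; rewrite perm_rcons.
Qed.

(* A uniform amount pushed around a cycle enters and leaves every vertex equally often. *)
Lemma cycle_net_inflow0 (cyc : seq (edge R A)) d x :
  cycle (fun e f => edst e == esrc f) cyc ->
  \sum_(e <- cyc) flow_at x (esrc e, edst e, d) = 0.
Proof.
move=> /cycle_perm_edst_esrc perm_cyc; rewrite /flow_at sumrB.
rewrite -(big_map (@edst R A) xpredT (fun y => if x == y then d else 0)).
rewrite -(big_map (@esrc R A) xpredT (fun y => if x == y then d else 0)).
by rewrite (perm_big _ perm_cyc) subrr.
Qed.

(* Distinct times make G duplicate-free, so cycle elimination removes a single edge c. *)
Definition wf_graph (V : seq A) G :=
  [/\ uniq (map (@etime R A) G), {in G, forall e, 0 <= eval e}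
    & {in G, forall e, esrc e \in V /\ edst e \in V}].

Lemma elim_step_wf V G G1 : elim_step G G1 -> wf_graph V G -> wf_graph V G1.
Proof.
move=> [cyc [c [_ _ c_min ->]]] [uniq_time eval_ge0 endsV].
set h := fun e : edge R A => if e \in cyc then _ else e.
have mem_h e1 : e1 \in [seq h e | e <- G & e != c] -> exists2 e, e \in G & e1 = h e.
  by case/mapP=> e; rewrite mem_filter => /andP[_ eG] ->; exists e.
split.
- rewrite -map_comp (@eq_map _ _ _ (@etime R A)) => [|e]; last by rewrite /= /h; case: ifP.
  exact/(subseq_uniq _ uniq_time)/map_subseq/filter_subseq.
- move=> _ /mem_h[e eG ->]; rewrite /h; case: ifP => [e_cyc|_]; last exact: eval_ge0.
  by rewrite /eval /Defs.tval /= subr_ge0; exact: c_min.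
- by move=> _ /mem_h[e eG ->]; rewrite /h; case: ifP => _; exact: endsV e eG.
Qed.

Lemma elim_step_net_inflow G G1 x :
  elim_step G G1 -> uniq G -> net_inflow G1 x = net_inflow G x.
Proof.
move=> [cyc [c [[_ cycG uniq_cyc _ cyc_cyc] c_cyc _ ->]]] uniqG.
have cycG' : {subset cyc <= G} by exact/allP.
pose pushed e := if e \in cyc then flow_at x (esrc e, edst e, eval c) else 0.
have pushed0 : \sum_(e <- G) pushed e = 0.
  rewrite -big_mkcond -big_filter -[RHS](cycle_net_inflow0 (eval c) x cyc_cyc).
  apply/perm_big/uniq_perm; rewrite ?filter_uniq // => e; rewrite mem_filter.
  by case: (boolP (e \in cyc)) => // /cycG' ->.
have -> : net_inflow G x = \sum_(e <- G) (flow_at x e.2 - pushed e).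
  by rewrite sumrB pushed0 subr0.
rewrite /net_inflow big_map big_filter.
rewrite [RHS](bigD1_seq c (cycG' _ c_cyc) uniqG) /= /pushed c_cyc.
clear pushed0 pushed; case: c c_cyc => i [[y z] v] _; rewrite subrr add0r.
by apply: eq_bigr => e _; case: ifP => _; rewrite ?flow_atB ?subr0 //; case: e => ? [[]].
Qed.

Lemma elim_result_wf_net V G G2 :
  elim_result G G2 -> wf_graph V G -> wf_graph V G2 /\ net_inflow G2 =1 net_inflow G.
Proof.
elim=> [//|G0 G1 G3 step _ IH] wfG0.
have [wfG3 netG3] := IH (elim_step_wf step wfG0).
split=> // x; rewrite netG3 (elim_step_net_inflow _ step) //.
by case: wfG0 => /map_uniq.
Qed.

End Flows.

Section TransactionGraph.
Variables (R : realDomainType) (A : finType) (a0 : A) (post : seq (tx R A)).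

Local Notation post_at i := (nth (a0, a0, 0) post i).

Lemma txgraphP e :
  e \in txgraph a0 post ->
  exists2 i, (i < size post)%N &
    connect (post_rel post) a0 (tsrc (post_at i)) /\ e = (i, post_at i).
Proof. by case/mapP=> i; rewrite mem_filter mem_iota => /andP[? /andP[_ ?]] ->; exists i. Qed.

Lemma vertices_reachable x : x \in vertices a0 post -> connect (post_rel post) a0 x.
Proof.
rewrite mem_undup inE => /predU1P[-> //|].
case/flattenP=> _ /mapP[e /txgraphP[i i_lt [reach_src ->]] ->].
rewrite !inE => /orP[/eqP -> //|/eqP ->].
apply: connect_trans reach_src (connect1 _); apply/hasP; exists (post_at i).
  exact: mem_nth.
by rewrite !eqxx.
Qed.

Hypothesis tval_ge0 : {in post, forall t, 0 <= Defs.tval t}.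

Lemma txgraph_wf : wf_graph (vertices a0 post) (txgraph a0 post).
Proof.
split.
- by rewrite -map_comp map_id_in ?filter_uniq ?iota_uniq.
- by move=> e /txgraphP[i i_lt [_ ->]]; apply/tval_ge0/mem_nth.
move=> e e_G.
have ends_mem : [:: esrc e; edst e] \in [seq [:: esrc f; edst f] | f <- txgraph a0 post].
  exact: map_f.
by rewrite !mem_undup !inE; split; apply/orP; right; apply/flattenP;
  exists [:: esrc e; edst e]; rewrite // !inE eqxx ?orbT.
Qed.

(* Transactions left out of G leave unreachable addresses, so at a reachable one they only add. *)
Lemma net_inflow_txgraph_le x :
  connect (post_rel post) a0 x ->
  net_inflow (txgraph a0 post) x <= \sum_(t <- post) flow_at x t.
Proof.
move=> reach_x; rewrite /net_inflow big_map big_filter (big_nth (a0, a0, 0)) /index_iota subn0.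
rewrite [leRHS](bigID (fun i => connect (post_rel post) a0 (tsrc (post_at i)))) /= lerDl.
rewrite big_seq_cond sumr_ge0 // => i /andP[i_lt unreach].
rewrite mem_iota add0n in i_lt.
rewrite /flow_at; have -> : (x == tsrc (post_at i)) = false.
  by apply: contraNF unreach => /eqP <-.
by rewrite subr0; case: ifP => _ //; apply/tval_ge0/mem_nth.
Qed.

End TransactionGraph.

Lemma sum_bump1 (V : nmodType) (T : eqType) (S : seq T) (y : T) (F : T -> V) m :
  uniq S -> y \in S ->
  \sum_(x <- S) (if x == y then F x + m else F x) = \sum_(x <- S) F x + m.
Proof.
move=> uniqS yS; rewrite [LHS](bigD1_seq y yS uniqS) eqxx /=.
rewrite [X in _ = X + _](bigD1_seq y yS uniqS) /=.
by rewrite addrAC; congr (_ + _ + _); apply: eq_bigr => x /negbTE ->.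
Qed.

Section CalcFreeze.
Variables (R : realDomainType) (A : finType).
Implicit Types (a x : A) (l : seq A) (ob : A -> R) (es G : seq (edge R A)).

Lemma distribute_le tau es ob x :
  {in es, forall e, 0 <= eval e} ->
  distribute tau es ob x <= ob x + \sum_(e <- es | edst e == x) eval e.
Proof.
elim: es tau ob => [|e es IH] tau ob /= es_ge0; first by rewrite big_nil addr0.
have e_ge0 := es_ge0 e (mem_head _ _).
have {}es_ge0 : {in es, forall f, 0 <= eval f} by move=> f f_es; apply/es_ge0/mem_behead.
have rest_ge0 : 0 <= \sum_(f <- es | edst f == x) eval f.
  by rewrite big_seq_cond sumr_ge0 // => f /andP[/es_ge0].
rewrite big_cons; case: ifP => _; first by case: ifP => _; lra.
apply: le_trans (IH _ _ es_ge0) _; rewrite eq_sym.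
case: eqP => _ //; have : Num.min tau (eval e) <= eval e by rewrite ge_min lexx orbT.
lra.
Qed.

Lemma distribute_sum (S : seq A) tau es ob :
  uniq S -> {in es, forall e, edst e \in S} -> {in es, forall e, 0 <= eval e} ->
  0 <= tau -> tau <= \sum_(e <- es) eval e ->
  \sum_(x <- S) distribute tau es ob x = \sum_(x <- S) ob x + tau.
Proof.
move=> uniqS; elim: es tau ob => [|e es IH] tau ob /= es_S es_ge0 tau_ge0.
  by rewrite big_nil => tau_le0; rewrite (@le_anti _ _ tau 0) ?tau_ge0 ?tau_le0 ?addr0.
rewrite big_cons => tau_le; case: ifP => [tau_le0|_].
  by rewrite (@le_anti _ _ tau 0) ?tau_ge0 ?tau_le0 ?addr0.
have min_cases : let m := Num.min tau (eval e) in
    m = tau /\ tau <= eval e \/ m = eval e /\ eval e <= tau.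
  by case: (leP tau (eval e)) => ?; [left | right; split=> //; exact: ltW].
have e_S := es_S e (mem_head _ _).
have {}es_S : {in es, forall f, edst f \in S} by move=> f f_es; apply/es_S/mem_behead.
have {}es_ge0 : {in es, forall f, 0 <= eval f} by move=> f f_es; apply/es_ge0/mem_behead.
have rest_ge0 : 0 <= \sum_(f <- es) eval f by rewrite big_seq sumr_ge0.
rewrite IH //.
- by rewrite sum_bump1 //; lra.
- by case: min_cases => -[-> ?]; lra.
- by case: min_cases => -[-> ?]; lra.
Qed.

Lemma out_edges_sum G a (P : pred (edge R A)) (F : edge R A -> R) :
  \sum_(e <- out_edges G a | P e) F e = \sum_(e <- G | (esrc e == a) && P e) F e.
Proof. by rewrite (perm_big _ (permEl (perm_sort _ _))) big_filter_cond. Qed.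

Lemma sum_out_edges G a (F : edge R A -> R) :
  \sum_(e <- out_edges G a) F e = \sum_(e <- G | esrc e == a) F e.
Proof. by rewrite (perm_big _ (permEl (perm_sort _ _))) big_filter. Qed.

Lemma out_edgesP G a e : e \in out_edges G a -> e \in G /\ esrc e = a.
Proof. by rewrite mem_sort mem_filter => /andP[/eqP -> ->]. Qed.

Variables (Bal ob0 : A -> R) (G : seq (edge R A)).
Hypothesis eval_ge0 : {in G, forall e, 0 <= eval e}.

Definition topo_sorted l := forall e, e \in G -> esrc e \in l ->
  edst e \in l /\ (index (esrc e) l < index (edst e) l)%N.

(* What x can have been sent by the vertices already processed, i.e. those outside l. *)
Definition received l x := \sum_(e <- G | (edst e == x) && (esrc e \notin l)) eval e.

Definition feasible x := inflow G x + ob0 x <= Bal x + outflow G x.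

Lemma topo_sorted_out a l e : topo_sorted (a :: l) -> e \in out_edges G a -> edst e \in l.
Proof.
move=> topo /out_edgesP[eG src_e]; have [] := topo e eG; first by rewrite src_e mem_head.
by rewrite src_e /= eqxx inE => /predU1P[-> | //]; rewrite eqxx.
Qed.

Lemma topo_sorted_behead a l : a \notin l -> topo_sorted (a :: l) -> topo_sorted l.
Proof.
move=> a_l topo e eG src_l; have [] := topo e eG; first by rewrite inE src_l orbT.
have /negbTE src_a : esrc e != a by apply: contraNneq a_l => <-.
rewrite /= eq_sym src_a inE; by case: (eqVneq a (edst e)).
Qed.

Lemma received_le_inflow l x : received l x <= inflow G x.
Proof.
rewrite /received /inflow [leRHS](bigID (fun e => esrc e \notin l)) /= lerDl.
by rewrite big_seq_cond sumr_ge0 // => e /andP[/eval_ge0].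
Qed.

Lemma received_cons a l x : a \notin l ->
  received l x = received (a :: l) x + \sum_(e <- G | (esrc e == a) && (edst e == x)) eval e.
Proof.
move=> a_l; rewrite /received (bigID (fun e => esrc e == a)) /= addrC; congr (_ + _).
  by apply: eq_bigl => e; rewrite inE negb_or -andbA (andbC (esrc e \notin l)).
apply: eq_bigl => e; rewrite andbC; case: eqP => [->|_]; rewrite ?a_l ?andbT ?andbF //.
Qed.

Lemma process_oblig_le a ob fr x :
  (process Bal G (ob, fr) a).1 x <=
  ob x + \sum_(e <- G | (esrc e == a) && (edst e == x)) eval e.
Proof.
rewrite -out_edges_sum; apply: distribute_le => e /out_edgesP[eG _]; exact: eval_ge0.
Qed.

Lemma process_sum a l ob fr : uniq l -> topo_sorted (a :: l) ->
  ob a <= ob0 a + inflow G a -> feasible a ->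
  (process Bal G (ob, fr) a).2 a + \sum_(x <- l) (process Bal G (ob, fr) a).1 x =
  ob a + \sum_(x <- l) ob x.
Proof.
move=> uniq_l topo ob_a feas_a; have out_ge0 : 0 <= outflow G a.
  by rewrite /outflow big_seq_cond sumr_ge0 // => e /andP[/eval_ge0].
rewrite /= eqxx distribute_sum //.
- by rewrite addrCA subrKC addrC.
- by move=> e /(topo_sorted_out topo).
- by move=> e /out_edgesP[/eval_ge0].
- by rewrite subr_ge0 ge_min lexx.
rewrite sum_out_edges -/(outflow G a); move: feas_a; rewrite /feasible.
by case: (leP (ob a) (Bal a)) => _; lra.
Qed.

Lemma foldl_process_frozen l st x : x \notin l -> (foldl (process Bal G) st l).2 x = st.2 x.
Proof.
elim: l st => [|a l IH] st //=; rewrite inE negb_or => /andP[x_a x_l].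
by rewrite IH //= (negbTE x_a).
Qed.

Lemma calc_freeze_sum l ob fr :
  uniq l -> topo_sorted l -> {in l, forall x, feasible x} ->
  {in l, forall x, ob x <= ob0 x + received l x} ->
  \sum_(a <- l) (foldl (process Bal G) (ob, fr) l).2 a = \sum_(a <- l) ob a.
Proof.
elim: l ob fr => [|a l IH] ob fr; first by rewrite !big_nil.
move=> /= /andP[a_l uniq_l] topo feas ob_le.
have ob_a : ob a <= ob0 a + inflow G a.
  by apply: le_trans (ob_le a (mem_head _ _)) _; rewrite lerD2l received_le_inflow.
rewrite !big_cons foldl_process_frozen // -(process_sum fr) //; last exact: feas (mem_head _ _).
have := process_oblig_le a ob fr.
case: (process Bal G (ob, fr) a) => ob' fr' /= ob'_le.
congr (_ + _); apply: IH => // [|x x_l|x x_l].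
- exact: topo_sorted_behead topo.
- by apply: feas; rewrite inE x_l orbT.
apply: le_trans (ob'_le x) _.
by rewrite (received_cons _ a_l) addrA lerD2r ob_le // inE x_l orbT.
Qed.

End CalcFreeze.

Lemma balance_covers_net_inflow (R : realDomainType) (A : finType) (init : A -> R)
    (pre post : seq (tx R A)) (v a0 x : A) (s : R) :
  (forall y, 0 <= init y) -> valid_run init (pre ++ (v, a0, s) :: post) ->
  x \in vertices a0 post ->
  net_inflow (txgraph a0 post) x + (if x == a0 then s else 0) <=
  final_bal init (pre ++ (v, a0, s) :: post) x.
Proof.
move=> init_ge0 run xV; have /valid_run_cat[run_pre [_ v_ge0 run_post]] := run.
rewrite /final_bal foldl_cat /= -/(final_bal _ _) final_balE addrC.
apply: lerD; first exact: tval_le_apply_tx (valid_run_bal_ge0 init_ge0 run_pre) v_ge0.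
exact/net_inflow_txgraph_le/vertices_reachable/xV/valid_run_tval_ge0/run_post.
Qed.

Theorem theoremA1 (R : realDomainType) (A : finType) (init : A -> R)
    (pre post : seq (tx R A)) (v a0 : A) (s : R) (G' : seq (edge R A)) (L : seq A) :
  (forall x, 0 <= init x) ->
  valid_run init (pre ++ (v, a0, s) :: post) ->
  elim_result (txgraph a0 post) G' ->
  topo_order (vertices a0 post) G' L ->
  \sum_(a <- L) toFreeze (final_bal init (pre ++ (v, a0, s) :: post)) G' a0 s L a = s.
Proof.
move=> init_ge0 run elimG [uniqL [permL topoL]].
have /valid_run_cat[_ [_ _ /valid_run_tval_ge0 tval_ge0]] := run.
have [[_ eval_ge0 endsV] net_inflowG'] := elim_result_wf_net elimG (txgraph_wf a0 tval_ge0).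
have a0L : a0 \in L by rewrite (perm_mem permL) mem_undup mem_head.
pose ob0 x := if x == a0 then s else 0.
rewrite /toFreeze /calc_freeze (calc_freeze_sum (ob0 := ob0) eval_ge0) //.
- by rewrite (bigD1_seq a0 a0L uniqL) /= eqxx big1 ?addr0 // => x /negbTE ->.
- move=> e eG' _; rewrite (perm_mem permL).
  by have [_ ->] := endsV e eG'; split=> //; exact: topoL.
- move=> x xL; have xV : x \in vertices a0 post by rewrite -(perm_mem permL).
  have := balance_covers_net_inflow init_ge0 run xV.
  by rewrite -net_inflowG' net_inflowE /feasible /ob0; lra.
by move=> x _; rewrite lerDl /received big_seq_cond sumr_ge0 // => e /andP[/eval_ge0].
Qed.
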